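(* Let $B_0,\ldots,B_{m-1}$ be $d \times d$ real matrices, and suppose that $x \in \Sigma_m^\omega$ is very weakly extremal for $\mathcal{B}=\{B_0,\ldots,B_{m-1}\}$. Then there exists $y \in \Sigma_m^\omega$ which is recurrent and strongly extremal for $\mathcal{B}$, and satisfies $\mathcal L(y)\subseteq\mathcal L(x)$.
   Context: $\Sigma_m=\{0,\ldots,m-1\}$, $\Sigma_m^\omega$ is the set of infinite sequences $x=x_1x_2\cdots$ over $\Sigma_m$. A subword of $x$ is a finite word $x_{k+1}\cdots x_{k+n}$ with $k\ge0$, $n\ge1$; $\mathcal L(x)$ denotes the set of all subwords of $x$. A sequence is recurrent if every one of its subwords occurs infinitely many times in it. The joint spectral radius is $\varrho(\mathcal{B})=\lim_{n\to\infty}\max\{\|B_{i_1}\cdots B_{i_n}\|^{1/n}: i_j\in\Sigma_m\}$, with $\|\cdot\|$ the Euclidean operator norm. A sequence $x$ is strongly extremal for $\mathcal{B}$ if there is $\delta>0$ with $\|B_{x_n}\cdots B_{x_1}\|\ge\delta\varrho(\mathcal{B})^n$ for all $n\ge1$, and very weakly extremal for $\mathcal{B}$ if $\limsup_{n\to\infty}\|B_{x_n}\cdots B_{x_1}\|^{1/n}=\varrho(\mathcal{B})$. *)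

From HB Require Import structures.
From mathcomp Require Import all_boot all_order all_algebra.
From mathcomp Require Import all_classical all_reals all_analysis.
Set Implicit Arguments. Unset Strict Implicit. Unset Printing Implicit Defensive.
Import Order.TTheory GRing.Theory Num.Theory.
Local Open Scope ring_scope.
Local Open Scope classical_set_scope.

Definition eucl {R : realType} {d : nat} (v : 'cV[R]_d) : R :=
  Num.sqrt (\sum_(i < d) v i 0 ^+ 2).

Definition opnorm {R : realType} {d : nat} (A : 'M[R]_d) : R :=
  sup [set eucl (A *m v) | v in [set v : 'cV[R]_d | eucl v <= 1]].

Definition wprod {R : realType} {d m n : nat} (B : 'I_m -> 'M[R]_d)
  (w : n.-tuple 'I_m) : 'M[R]_d := \prod_(j < n) B (tnth w j).

Definition jsr {R : realType} {d m : nat} (B : 'I_m -> 'M[R]_d) : R :=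
  limn (fun n : nat =>
    \big[Num.max/0]_(w : n.-tuple 'I_m) powR (opnorm (wprod B w)) (n%:R^-1)).

(* infinite sequences x = x_1 x_2 ...; x_k is represented by (x k.-1) *)
(* product B_{x_n} ... B_{x_1} *)
Definition xprod {R : realType} {d m : nat} (B : 'I_m -> 'M[R]_d)
  (x : nat -> 'I_m) (n : nat) : 'M[R]_d := \prod_(j < n) B (x (rev_ord j)).

Definition strongly_extremal {R : realType} {d m : nat} (B : 'I_m -> 'M[R]_d)
  (x : nat -> 'I_m) : Prop :=
  exists delta : R, 0 < delta /\
    forall n : nat, (1 <= n)%N -> delta * jsr B ^+ n <= opnorm (xprod B x n).

Definition very_weakly_extremal {R : realType} {d m : nat} (B : 'I_m -> 'M[R]_d)
  (x : nat -> 'I_m) : Prop :=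
  limn_esup (fun n : nat => (powR (opnorm (xprod B x n.+1)) (n.+1%:R^-1))%:E)
  = (jsr B)%:E.

Definition subword {m : nat} (x : nat -> 'I_m) (k n : nat) : seq 'I_m :=
  mkseq (fun i => x (k + i)%N) n.

Definition language {m : nat} (x : nat -> 'I_m) : set (seq 'I_m) :=
  [set w | exists k n : nat, (1 <= n)%N /\ w = subword x k n].

Definition recurrent {m : nat} (x : nat -> 'I_m) : Prop :=
  forall w, language x w -> forall N : nat, exists k : nat,
    (N <= k)%N /\ subword x k (size w) = w.

From HB Require Import structures.
From mathcomp Require Import all_boot all_order all_algebra.
From mathcomp Require Import all_classical all_reals all_analysis.
From mathcomp Require Import zify ring lra.
Set Implicit Arguments. Unset Strict Implicit. Unset Printing Implicit Defensive.
Import Order.TTheory GRing.Theory Num.Theory.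
Local Open Scope ring_scope.
Local Open Scope classical_set_scope.

(* Write nu w for the norm of the matrix product along the word w and rho for the
   joint spectral radius, and call a word extremal when each of its nonempty
   prefixes p satisfies nu p >= rho ^ |p| / 2.  If from some position on no
   window of length N of x were extremal, the normalised norms
   nu (x_1 .. x_n) / rho ^ n would halve at least once every N steps and so
   decay geometrically, which very weak extremality forbids; hence x has
   extremal windows of every length arbitrarily far out.  By Koenig's lemma
   these windows accumulate on a sequence whose prefixes are all extremal (so
   it is strongly extremal with delta = 1/2) and whose language lies in L(x).
   Zorn's lemma yields such a sequence y with minimal language.  The same
   compactness argument applied to a tail of y gives a sequence of this kind
   whose language lies in that of the tail, so by minimality every subword of
   y occurs in every tail: y is recurrent.  Beyond its being the limsup in the
   hypothesis, no property of the joint spectral radius is used. *)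

Section OperatorNorm.
Context {R : realType} {d : nat}.
Implicit Types (A : 'M[R]_d) (v : 'cV[R]_d).

Lemma eucl_ge0 v : 0 <= eucl v.
Proof. exact: sqrtr_ge0. Qed.

Lemma euclZ (c : R) v : eucl (c *: v) = `|c| * eucl v.
Proof.
rewrite /eucl; under eq_bigr => i _ do rewrite mxE exprMn.
by rewrite -mulr_sumr sqrtrM ?sqr_ge0 // sqrtr_sqr.
Qed.

Lemma eucl0 : eucl (0 : 'cV[R]_d) = 0.
Proof. by rewrite -(scale0r (0 : 'cV[R]_d)) euclZ normr0 mul0r. Qed.

Lemma eucl_eq0 v : eucl v = 0 -> v = 0.
Proof.
move=> /eqP; rewrite /eucl sqrtr_eq0 => sum_le0.
have /psumr_eq0P sum0 : \sum_(i < d) v i 0 ^+ 2 = 0.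
  by apply/eqP; rewrite eq_le sum_le0 sumr_ge0 // => i _; rewrite sqr_ge0.
apply/matrixP => i j; rewrite ord1 mxE.
by apply/eqP; rewrite -sqrf_eq0; apply/eqP/sum0 => // k _; rewrite sqr_ge0.
Qed.

Lemma normr_coord_le_eucl v i : `|v i 0| <= eucl v.
Proof.
rewrite /eucl -sqrtr_sqr ler_sqrt ?sumr_ge0 // => [|j _]; last exact: sqr_ge0.
by rewrite (bigD1 i) //= lerDl sumr_ge0 // => j _; exact: sqr_ge0.
Qed.

Lemma opnorm_set_bounded A :
  has_ubound [set eucl (A *m v) | v in [set v | eucl v <= 1]].
Proof.
exists (Num.sqrt (\sum_(i < d) (\sum_(j < d) `|A i j|) ^+ 2)) => _ [v v_le1 <-].
rewrite /eucl ler_sqrt; last by rewrite sumr_ge0 // => i _; exact: sqr_ge0.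
apply: ler_sum => i _; rewrite mxE.
rewrite -[_ ^+ 2]ger0_norm ?sqr_ge0 // normrX lerXn2r ?nnegrE ?sumr_ge0 //.
apply: le_trans (ler_norm_sum _ _ _) _; apply: ler_sum => j _.
by rewrite normrM ler_piMr //; exact: le_trans (normr_coord_le_eucl v j) v_le1.
Qed.

Lemma opnorm_ub A v : eucl v <= 1 -> eucl (A *m v) <= opnorm A.
Proof. by move=> v_le1; apply: (ub_le_sup (opnorm_set_bounded A)); exists v. Qed.

Lemma opnorm_ge0 A : 0 <= opnorm A.
Proof. by have := @opnorm_ub A 0; rewrite mulmx0 eucl0 ler01; apply. Qed.

Lemma opnorm_le A v : eucl (A *m v) <= opnorm A * eucl v.
Proof.
have [/eucl_eq0 ->|v_neq0] := eqVneq (eucl v) 0; first by rewrite mulmx0 eucl0 mulr0.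
have v_gt0 : 0 < eucl v by rewrite lt_def v_neq0 eucl_ge0.
have := @opnorm_ub A ((eucl v)^-1 *: v).
rewrite -scalemxAr !euclZ ger0_norm ?invr_ge0 ?eucl_ge0 // mulVf // lexx.
by move=> /(_ isT); rewrite ler_pdivrMl // mulrC.
Qed.

Lemma opnormM A A' : opnorm (A * A') <= opnorm A * opnorm A'.
Proof.
apply: ge_sup; first by exists (eucl (A * A' *m 0)), 0; rewrite //= eucl0.
move=> _ [v v_le1 <-]; rewrite -mulmxE -mulmxA.
apply: le_trans (opnorm_le _ _) _; rewrite ler_wpM2l ?opnorm_ge0 //.
by apply: le_trans (opnorm_le _ _) _; rewrite ler_piMr ?opnorm_ge0.
Qed.

Lemma opnorm1 : opnorm (1 : 'M[R]_d) <= 1.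
Proof.
apply: ge_sup; first by exists (eucl (1 *m (0 : 'cV[R]_d))), 0; rewrite //= eucl0.
by move=> _ [v v_le1 <-]; rewrite mul1mx.
Qed.

End OperatorNorm.

Section Subwords.
Context {m : nat}.
Implicit Types (z : nat -> 'I_m) (L : set (seq 'I_m)).

Lemma size_subword z k n : size (subword z k n) = n.
Proof. exact: size_mkseq. Qed.

Lemma subwordD z k n1 n2 :
  subword z k (n1 + n2) = subword z k n1 ++ subword z (k + n1) n2.
Proof.
rewrite /subword /mkseq iotaD map_cat; congr (_ ++ _).
rewrite add0n -[n1 in iota n1 _]addn0 iotaDl -map_comp.
by apply: eq_map => i /=; rewrite addnA.
Qed.

Lemma subwordS z k n : subword z k n.+1 = rcons (subword z k n) (z (k + n)%N).
Proof. by rewrite -addn1 subwordD cats1 /subword /mkseq /= addn0. Qed.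

Lemma take_subword z k n t : (t <= n)%N -> take t (subword z k n) = subword z k t.
Proof. by move=> le_tn; rewrite -(subnKC le_tn) subwordD take_size_cat ?size_subword. Qed.

Lemma drop_subword z k n t : (t <= n)%N ->
  drop t (subword z k n) = subword z (k + t) (n - t).
Proof. by move=> le_tn; rewrite -{1}(subnKC le_tn) subwordD drop_size_cat ?size_subword. Qed.

Lemma subword_shift z s k n : subword (fun i => z (s + i)%N) k n = subword z (s + k) n.
Proof. by apply: eq_map => i; rewrite addnA. Qed.

Lemma subword_infix z k n : infix (subword z k n) (subword z 0 (k + n)).
Proof. by rewrite subwordD add0n suffix_infix. Qed.

Lemma language_subword z k n : (0 < n)%N -> language z (subword z k n).
Proof. by exists k, n. Qed.

Definition factor_closed L := forall u w, L w -> infix u w -> u != [::] -> L u.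

Lemma language_factor_closed z : factor_closed (language z).
Proof.
move=> u _ [k [n [_ ->]]] /infixP[s [s' def_w]] u_neq0.
have size_w : n = (size s + size u + size s')%N.
  by rewrite -(size_subword z k n) def_w !size_cat addnA.
have -> : u = subword z (k + size s) (size u).
  rewrite -(take_subword _ _ (_ : size u <= n - size s)%N); last by lia.
  by rewrite -drop_subword ?def_w ?drop_size_cat ?take_size_cat //; lia.
by apply: language_subword; rewrite lt0n size_eq0.
Qed.

End Subwords.

Section WordMatrices.
Context {R : realType} {d m : nat} (B : 'I_m -> 'M[R]_d).

Definition word_mx (w : seq 'I_m) : 'M[R]_d := \prod_(a <- rev w) B a.

Lemma word_mx_cat s t : word_mx (s ++ t) = word_mx t * word_mx s.
Proof. by rewrite /word_mx rev_cat big_cat. Qed.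

Lemma xprod_word_mx z n : xprod B z n = word_mx (subword z 0 n).
Proof.
elim: n => [|n IH]; first by rewrite /xprod big_ord0 /word_mx big_nil.
rewrite subwordS -cats1 word_mx_cat /word_mx /= big_cons big_nil mulr1 -/(word_mx _) -IH.
by rewrite /xprod big_ord_recl /= subn1.
Qed.

Lemma opnorm_word_mx_cat s t :
  opnorm (word_mx (s ++ t)) <= opnorm (word_mx s) * opnorm (word_mx t).
Proof. by rewrite word_mx_cat mulrC opnormM. Qed.

Lemma opnorm_word_mx_nil : opnorm (word_mx [::]) <= 1.
Proof. by rewrite /word_mx big_nil opnorm1. Qed.

End WordMatrices.

Lemma expr_lt_eventually {R : realType} (z e : R) : 0 <= z < 1 -> 0 < e ->
  exists N, forall n, (N <= n)%N -> z ^+ n < e.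
Proof.
move=> /andP[z_ge0 z_lt1] e_gt0; have : `|z| < 1 by rewrite ger0_norm.
move=> /cvg_expr/cvgrPdist_lt/(_ e e_gt0) [N _ HN].
by exists N => n /HN /=; rewrite sub0r normrN ger0_norm // exprn_ge0.
Qed.

Lemma powR_invnK {R : realType} (a : R) (n : nat) :
  0 <= a -> (0 < n)%N -> powR a n%:R^-1 ^+ n = a.
Proof.
move=> a_ge0 n_gt0.
by rewrite -powR_mulrn ?powR_ge0 // -powRrM mulVf ?pnatr_eq0 -?lt0n // powRr1.
Qed.

Lemma limn_esup_inf {R : realType} (u : nat -> \bar R) :
  limn_esup u = ereal_inf (range (esups u)).
Proof. by rewrite limn_esup_lim; apply/cvg_lim => //; exact: cvg_esups_inf. Qed.

Lemma limn_esup_gt {R : realType} (u : nat -> \bar R) (l c : R) :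
  limn_esup u = l%:E -> c < l -> forall M, exists n, (M <= n)%N /\ (c%:E < u n)%E.
Proof.
rewrite limn_esup_inf => lim c_lt M.
have : (c%:E < esups u M)%E.
  apply: lt_le_trans (_ : l%:E <= _)%E; first by rewrite lte_fin.
  by rewrite -lim; apply: ereal_inf_lbound; exists M.
by move=> /ereal_sup_gt[_ [n Mn <-] ?]; exists n.
Qed.

Lemma limn_esup_ge0 {R : realType} (u : nat -> \bar R) :
  (forall n, 0 <= u n)%E -> (0 <= limn_esup u)%E.
Proof.
move=> u_ge0; rewrite limn_esup_inf; apply: le_ereal_inf_tmp => _ [n _ <-].
by apply: le_trans (u_ge0 n) _; apply: ereal_sup_ubound; exists n => /=.
Qed.

Lemma halving_decay {R : realFieldType} (a : nat -> R) (g : R) (N M : nat) :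
  1 <= g -> (forall j, 0 <= a j) ->
  (forall j t, a (j + t)%N <= g ^+ t * a j) ->
  (forall j, (M <= j)%N -> exists2 t, (0 < t <= N)%N & 2 * a (j + t)%N <= a j) ->
  forall j n, (M <= j <= n)%N -> 2 ^+ ((n - j) %/ N) * a n <= g ^+ N * a j.
Proof.
move=> g_ge1 a_ge0 a_grow a_halve.
have g_ge0 : 0 <= g by apply: le_trans g_ge1.
suff decay s j n : (n - j <= s)%N -> (M <= j <= n)%N ->
    2 ^+ ((n - j) %/ N) * a n <= g ^+ N * a j.
  by move=> j n; exact: decay.
elim: s j => [|s IH] j le_s /andP[Mj jn].
  have -> : n = j by lia.
  by rewrite subnn div0n expr0 mul1r ler_peMl // exprn_ege1.
have [t /andP[t_gt0 t_leN] halve] := a_halve j Mj.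
have [short|long] := ltnP n (j + N).
  rewrite divn_small ?expr0 ?mul1r; last by lia.
  rewrite -(subnKC jn); apply: le_trans (a_grow _ _) _.
  by rewrite ler_wpM2r // ler_weXn2l //; lia.
have step : ((n - j) %/ N <= ((n - (j + t)) %/ N).+1)%N.
  have /(leq_div2r N) : (n - j <= (n - (j + t)) + 1 * N)%N by lia.
  by rewrite divnDMl ?addn1 //; lia.
apply: le_trans (_ : 2 * (2 ^+ ((n - (j + t)) %/ N) * a n) <= _).
  by rewrite mulrA -exprS ler_wpM2r // ler_weXn2l //; lra.
apply: le_trans (_ : 2 * (g ^+ N * a (j + t)%N) <= _).
  by rewrite ler_wpM2l // IH //; lia.
by rewrite mulrCA ler_wpM2l // exprn_ge0.
Qed.

Lemma halving_floor_le_expr {R : realType} (b : nat -> R) (N M : nat) (G : R) :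
  (0 < N)%N -> 0 < G ->
  (forall n, (M <= n)%N -> 2 ^+ ((n - M) %/ N) * b n <= G) ->
  exists2 lam, 0 < lam < 1 & exists n0, forall n, (n0 <= n)%N -> b n <= lam ^+ n.
Proof.
move=> N_gt0 G_gt0 decay.
(* With lam ^ N = 3/4 we get lam ^ n >= lam ^ (M + N) * (3/4) ^ q, and
   2 ^ q * (3/4) ^ q = (3/2) ^ q eventually beats G. *)
pose lam := powR (3 / 4 : R) N%:R^-1.
have lam_gt0 : 0 < lam by rewrite powR_gt0 //; lra.
have lamN : lam ^+ N = 3 / 4 by rewrite powR_invnK //; lra.
have lam_lt1 : lam < 1.
  by rewrite ltNge; apply/negP => /(exprn_ege1 N); rewrite lamN; lra.
exists lam; first by rewrite lam_gt0 lam_lt1.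
set L := lam ^+ (M + N); have L_gt0 : 0 < L by rewrite exprn_gt0.
have [Q smallQ] : exists Q, forall q, (Q <= q)%N -> (2 / 3) ^+ q < L / G.
  by apply: expr_lt_eventually; [lra | rewrite divr_gt0].
exists (M + N * Q)%N => n le_n; set q := ((n - M) %/ N)%N.
have Qq : (Q <= q)%N by rewrite /q leq_divRL //; lia.
have n_lt : (n < M + N + q * N)%N.
  by have := ltn_pmod (n - M) N_gt0; have := divn_eq (n - M) N; rewrite -/q; lia.
have lamn_ge : L * (3 / 4) ^+ q <= lam ^+ n.
  by rewrite -lamN -exprM -exprD ler_wiXn2l ?ltW //; lia.
have twoX_gt0 : 0 < 2 ^+ q :> R by rewrite exprn_gt0.
apply: le_trans lamn_ge; rewrite -(ler_pM2l twoX_gt0).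
apply: le_trans (decay n _) _; first by lia.
have one : 2 ^+ q * (3 / 4) ^+ q * (2 / 3) ^+ q = 1 :> R.
  by rewrite -!exprMn -[X in _ = X](expr1n _ q); congr (_ ^+ _); lra.
have G_eq : (2 / 3) ^+ q * G * (2 ^+ q * (3 / 4) ^+ q) = G.
  by transitivity (G * (2 ^+ q * (3 / 4) ^+ q * (2 / 3) ^+ q)); [ring | rewrite one mulr1].
have := smallQ q Qq; rewrite ltr_pdivlMr // => /ltW GH.
rewrite -G_eq mulrCA ler_pM2l //.
by rewrite ler_wpM2r // exprn_ge0.
Qed.

Section ExtremalWords.
Context {R : realType} {m : nat} (nu : seq 'I_m -> R) (rho : R).
Implicit Types (w : seq 'I_m) (z : nat -> 'I_m).

Definition extremal_word w :=
  forall k, (0 < k <= size w)%N -> rho ^+ k / 2 <= nu (take k w).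

Definition prefix_extremal z := forall n, extremal_word (subword z 0 n).

Definition extremal_windows z :=
  forall N M, exists i, (M <= i)%N /\ extremal_word (subword z i N).

Lemma extremal_word_prefix p w : extremal_word w -> prefix p w -> extremal_word p.
Proof.
rewrite prefixE => ext_w /eqP <- k /andP[k_gt0]; rewrite size_take_min => k_le.
by rewrite take_takel; [apply: ext_w; rewrite k_gt0 /=|]; lia.
Qed.

Lemma prefix_extremal_le z n : prefix_extremal z -> (0 < n)%N ->
  rho ^+ n / 2 <= nu (subword z 0 n).
Proof.
move=> ext_z n_gt0; have := ext_z n n.
by rewrite size_subword take_subword // n_gt0 leqnn; apply.
Qed.

Lemma extremal_windows_shift z s :
  extremal_windows z -> extremal_windows (fun i => z (s + i)%N).
Proof.
move=> win N M; have [i [Mi ext_i]] := win N (s + M)%N.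
exists (i - s)%N; rewrite subword_shift subnKC; first by split => //; lia.
by apply: leq_trans Mi; rewrite leq_addr.
Qed.

End ExtremalWords.

(* [nu w] stands for the norm of the matrix product along [w]; only its
   submultiplicativity is used. *)
Section Growth.
Context {R : realType} {m : nat} (nu : seq 'I_m -> R).
Hypotheses (nu_ge0 : forall w, 0 <= nu w) (nu_nil : nu [::] <= 1)
  (nu_cat : forall s t, nu (s ++ t) <= nu s * nu t).
Implicit Types (z : nat -> 'I_m).

Let c := \sum_(a < m) nu [:: a].
Let c_ge0 : 0 <= c := sumr_ge0 _ (fun a _ => nu_ge0 [:: a]).

Lemma nu_le_expr w : nu w <= c ^+ size w.
Proof.
elim: w => [|a w IH] //=; rewrite exprS -cat1s.
apply: le_trans (nu_cat _ _) _; apply: ler_pM => //.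
by rewrite /c (bigD1 a) //= lerDl sumr_ge0.
Qed.

Lemma nu_subword_cat z j t :
  nu (subword z 0 (j + t)) <= nu (subword z 0 j) * nu (subword z j t).
Proof. by rewrite subwordD add0n. Qed.

Lemma extremal_windows0 z : extremal_windows nu 0 z.
Proof. by move=> N M; exists M; split => // -[|k] // _; rewrite expr0n mul0r. Qed.

Section PositiveRadius.
Variable rho : R.
Hypothesis rho_gt0 : 0 < rho.

(* Per-letter growth bound for [nu (z_1 .. z_n) / rho ^ n]; adding [rho] to [c]
   makes it at least 1. *)
Let gam := (c + rho) / rho.

Let gam_ge1 : 1 <= gam.
Proof. by rewrite /gam ler_pdivlMr // mul1r lerDr c_ge0. Qed.

Lemma nu_subword_decay z N M :
  (forall i, (M <= i)%N -> ~ extremal_word nu rho (subword z i N)) ->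
  forall n, (M <= n)%N ->
  2 ^+ ((n - M) %/ N) * nu (subword z 0 n) <= gam ^+ (N + M) * rho ^+ n.
Proof.
move=> no_window n Mn.
have rhoX_gt0 j : 0 < rho ^+ j by rewrite exprn_gt0.
pose a j := nu (subword z 0 j) / rho ^+ j.
have a_ge0 j : 0 <= a j by rewrite divr_ge0 // ltW.
have a_grow j t : a (j + t)%N <= gam ^+ t * a j.
  have -> : gam ^+ t * a j = nu (subword z 0 j) * (c + rho) ^+ t / rho ^+ (j + t).
    by rewrite /a /gam expr_div_n exprD; field; rewrite !expf_neq0 ?gt_eqF.
  rewrite /a ler_pM2r ?invr_gt0 //; apply: le_trans (nu_subword_cat _ _ _) _.
  rewrite ler_wpM2l // (le_trans (nu_le_expr _)) // size_subword.
  by rewrite lerXn2r ?nnegrE ?addr_ge0 ?c_ge0 ?ltW // ltrDl.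
have a_halve j : (M <= j)%N -> exists2 t, (0 < t <= N)%N & 2 * a (j + t)%N <= a j.
  move=> Mj; have /existsNP[k] := no_window j Mj.
  move=> /not_implyP[k_range /negP]; rewrite -ltNge size_subword in k_range *.
  rewrite take_subword; last by case/andP: k_range.
  move=> small; exists k => //.
  have -> : a j = nu (subword z 0 j) * rho ^+ k / rho ^+ (j + k).
    by rewrite /a exprD; field; rewrite !expf_neq0 ?gt_eqF.
  rewrite /a mulrA ler_pM2r ?invr_gt0 //.
  apply: le_trans (_ : 2 * (nu (subword z 0 j) * nu (subword z j k)) <= _).
    by rewrite ler_pM2l // nu_subword_cat.
  by rewrite mulrCA ler_wpM2l // mulrC -ler_pdivlMr // ltW.
have decay : 2 ^+ ((n - M) %/ N) * a n <= gam ^+ N * a M.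
  by apply: (halving_decay gam_ge1 a_ge0 a_grow a_halve); rewrite leqnn Mn.
have a_le : a M <= gam ^+ M.
  apply: le_trans (a_grow 0%N M) _; rewrite /a expr0 divr1.
  by rewrite ler_piMr ?exprn_ge0 ?(le_trans ler01 gam_ge1).
rewrite -ler_pdivrMr // -mulrA -/(a n) exprD.
apply: le_trans decay _; rewrite ler_wpM2l //.
by rewrite exprn_ge0 // (le_trans ler01 gam_ge1).
Qed.

Lemma extremal_windows_of_growth z :
  (forall lam, 0 < lam < 1 -> forall M, exists n,
     (M <= n)%N /\ (lam * rho) ^+ n < nu (subword z 0 n)) ->
  extremal_windows nu rho z.
Proof.
move=> growth N M; apply: contrapT => no_window.
have {}no_window i : (M <= i)%N -> ~ extremal_word nu rho (subword z i N).
  by move=> Mi ext_i; apply: no_window; exists i.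
have N_gt0 : (0 < N)%N.
  have [N0|//] := posnP N; exfalso.
  by apply: (no_window M) => // k; rewrite N0 size_subword; lia.
have G_gt0 : 0 < gam ^+ (N + M) by rewrite exprn_gt0 // (lt_le_trans ltr01 gam_ge1).
have [|lam lam_range [n0 small]] :=
  @halving_floor_le_expr _ (fun n => nu (subword z 0 n) / rho ^+ n) N M _ N_gt0 G_gt0.
  move=> n Mn; rewrite mulrA ler_pdivrMr ?exprn_gt0 //; exact: nu_subword_decay.
have [n [n0n big]] := growth lam lam_range n0.
have := small n n0n; rewrite ler_pdivrMr ?exprn_gt0 // -exprMn.
by rewrite leNgt big.
Qed.

Lemma prefix_extremal_growth z : prefix_extremal nu rho z ->
  forall lam, 0 < lam < 1 -> forall M, exists n,
    (M <= n)%N /\ (lam * rho) ^+ n < nu (subword z 0 n).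
Proof.
move=> ext_z lam /andP[lam_gt0 lam_lt1] M.
have [N0 small] : exists N0, forall n, (N0 <= n)%N -> lam ^+ n < 1 / 2.
  by apply: expr_lt_eventually; lra.
exists (maxn M (maxn N0 1)); split; first exact: leq_maxl.
set n := maxn _ _; have n_gt0 : (0 < n)%N by lia.
apply: lt_le_trans (prefix_extremal_le ext_z n_gt0).
rewrite exprMn mulrC ltr_pM2l ?exprn_gt0 //.
by rewrite -div1r small //; lia.
Qed.

End PositiveRadius.

Lemma prefix_extremal_windows rho z :
  0 <= rho -> prefix_extremal nu rho z -> extremal_windows nu rho z.
Proof.
rewrite le_eqVlt => /orP[/eqP <-|rho_gt0] ext_z; first exact: extremal_windows0.
exact/extremal_windows_of_growth/prefix_extremal_growth.
Qed.

Lemma limsup_extremal_windows rho z :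
  limn_esup (fun n => (powR (nu (subword z 0 n.+1)) n.+1%:R^-1)%:E) = rho%:E ->
  extremal_windows nu rho z.
Proof.
move=> lim; have : (0 <= rho%:E)%E.
  by rewrite -lim; apply: limn_esup_ge0 => n; rewrite lee_fin powR_ge0.
rewrite lee_fin le_eqVlt => /orP[/eqP <-|rho_gt0]; first exact: extremal_windows0.
apply: extremal_windows_of_growth => // lam /andP[lam_gt0 lam_lt1] M.
have lam_rho_lt : lam * rho < rho by rewrite gtr_pMl.
have [n [Mn]] := limn_esup_gt lim lam_rho_lt M.
rewrite lte_fin => lt_root; exists n.+1; split; first exact: leqW.
rewrite -[nu _](@powR_invnK _ _ n.+1) //.
by rewrite (ltrXn2r _ _ lt_root) // mulr_ge0 ?ltW.
Qed.

End Growth.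

Lemma directed_exists_forall (T : finType) (I : Type) (D : set I)
    (r : I -> I -> Prop) (P : T -> I -> Prop) :
  D !=set0 -> (forall i j, D i -> D j -> exists k, [/\ D k, r i k & r j k]) ->
  (forall a i j, r i j -> P a j -> P a i) ->
  (forall i, D i -> exists a, P a i) -> exists a, forall i, D i -> P a i.
Proof.
move=> [i0 Di0] directed antitone exP; apply: contrapT => /forallNP noP.
have /choice[f fP] a : exists i, D i /\ ~ P a i.
  by have /existsNP[i /not_implyP] := noP a; exists i.
suff [k [Dk notP]] : exists k, D k /\ forall a, a \in enum T -> ~ P a k.
  by have [a Pa] := exP k Dk; apply: (notP a) Pa; rewrite mem_enum.
elim: (enum T) => [|a s [k [Dk notP]]]; first by exists i0.
have [k' [Dk' le_fk' le_kk']] := directed _ _ (fP a).1 Dk.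
exists k'; split => // b; rewrite in_cons => /orP[/eqP -> | b_s] Pbk'.
- exact: (fP a).2 (antitone _ _ _ le_fk' Pbk').
- exact: notP b_s (antitone _ _ _ le_kk' Pbk').
Qed.

Lemma koenig_sequence {m : nat} (P : seq 'I_m -> Prop) :
  P [::] -> (forall p, P p -> exists a, P (rcons p a)) ->
  exists z : nat -> 'I_m, forall n, P (subword z 0 n).
Proof.
move=> P0 Pext; have [a0 _] := Pext _ P0.
have /choice[f fP] p : exists a, P p -> P (rcons p a).
  have [/Pext[a Pa]|nPp] := pselect (P p); [by exists a|by exists a0].
pose pre := fix pre n := if n is k.+1 then rcons (pre k) (f (pre k)) else [::].
exists (fun n => f (pre n)).
have pre_subword n : pre n = subword (fun n => f (pre n)) 0 n.
  by elim: n => [//|n IH]; rewrite subwordS /= -IH add0n.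
by move=> n; rewrite -pre_subword; elim: n => [//|n IH]; exact: fP.
Qed.

Section Compactness.
Context {R : realType} {m : nat} (nu : seq 'I_m -> R) (rho : R).
Implicit Types (L : set (seq 'I_m)) (p w : seq 'I_m) (z : nat -> 'I_m).

Definition extendable L p := forall N, exists w,
  [/\ L w, extremal_word nu rho w, (N <= size w)%N & prefix p w].

Lemma extendable_mono L L' p : L `<=` L' -> extendable L p -> extendable L' p.
Proof. by move=> sLL' ext N; have [w [/sLL' ? ? ? ?]] := ext N; exists w. Qed.

Lemma extendable_rcons L p : extendable L p -> exists a, extendable L (rcons p a).
Proof.
move=> ext; pose P a N := exists w,
  [/\ L w, extremal_word nu rho w, (N <= size w)%N & prefix (rcons p a) w].
suff [a Pa] : exists a, forall N, setT N -> P a N by exists a => N; exact: Pa.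
apply: (@directed_exists_forall _ _ setT (fun i j => i <= j)%N).
- by exists 0%N.
- by move=> i j _ _; exists (maxn i j); rewrite leq_maxl leq_maxr.
- move=> a i j le_ij [w [Lw ext_w le_jw pre_w]].
  by exists w; split => //; apply: leq_trans le_jw.
move=> N _; have [w [Lw ext_w le_w /prefixP[s def_w]]] := ext (maxn N (size p).+1).
case: s def_w => [|a s] def_w; first by move: le_w; rewrite def_w cats0; lia.
exists a, w; split => //; first by apply: leq_trans le_w; exact: leq_maxl.
by apply/prefixP; exists s; rewrite def_w cat_rcons.
Qed.

Lemma prefix_extremal_below_chain (A : set (set (seq 'I_m))) L0 :
  A L0 -> total_on A (fun L L' => L' `<=` L) -> (forall L, A L -> factor_closed L) ->
  (forall L, A L -> extendable L [::]) ->
  exists z, prefix_extremal nu rho z /\ forall L, A L -> language z `<=` L.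
Proof.
move=> AL0 total closed ext0.
pose P p := forall L, A L -> extendable L p.
have P_rcons p : P p -> exists a, P (rcons p a).
  move=> Pp; apply: (@directed_exists_forall _ _ A (fun L L' => L' `<=` L)).
  - by exists L0.
  - move=> L L' AL AL'.
    by have [sub|sub] := total _ _ AL AL'; [exists L'|exists L]; split.
  - by move=> a L L' sub; apply: extendable_mono.
  by move=> L AL; apply: extendable_rcons; exact: Pp.
have [z Pz] := koenig_sequence ext0 P_rcons.
exists z; split.
  by move=> n; have [w [_ ext_w _]] := Pz n L0 AL0 0%N; exact: extremal_word_prefix.
move=> L AL _ [k [n [n_gt0 ->]]].
have [w [Lw _ _ pre_w]] := Pz (k + n)%N L AL 0%N.
apply: (closed L AL _ w Lw); first exact: infix_prefix_trans (subword_infix z k n) pre_w.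
by rewrite -size_eq0 size_subword -lt0n.
Qed.

Lemma extendable_language z :
  (forall N, exists i, extremal_word nu rho (subword z i N)) -> extendable (language z) [::].
Proof.
move=> ext N; have [i ext_i] := ext N.+1.
by exists (subword z i N.+1); rewrite size_subword; split => //; exact: language_subword.
Qed.

Lemma prefix_extremal_in_language z :
  (forall N, exists i, extremal_word nu rho (subword z i N)) ->
  exists y, prefix_extremal nu rho y /\ language y `<=` language z.
Proof.
move=> ext.
have [||||y [ext_y sub]] := @prefix_extremal_below_chain [set language z] (language z).
- by [].
- by move=> L L' -> ->; left.
- by move=> L ->; exact: language_factor_closed.
- by move=> L ->; exact: extendable_language.
- by exists y; split => //; exact: sub.
Qed.

Lemma minimal_prefix_extremal L0 z0 :
  prefix_extremal nu rho z0 -> language z0 `<=` L0 ->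
  exists y, [/\ prefix_extremal nu rho y, language y `<=` L0 &
    forall z, prefix_extremal nu rho z -> language z `<=` language y ->
      language y `<=` language z].
Proof.
move=> ext_z0 sub_z0.
pose T := {z | prefix_extremal nu rho z /\ language z `<=` L0}.
(* Reverse inclusion of languages: premaximal elements have minimal language. *)
pose finer (s t : T) := `[< language (sval t) `<=` language (sval s) >].
have [|||[y [ext_y sub_y]] y_min] := @ZL_preorder T (exist _ z0 (conj ext_z0 sub_z0)) finer.
- by move=> t; apply/asboolP.
- by move=> r s t /asboolP rs /asboolP st; apply/asboolP; exact: subset_trans st rs.
- move=> A total.
  have [[s0 As0]|A0] := pselect (exists s, A s); last first.
    by exists (exist _ z0 (conj ext_z0 sub_z0)) => s As; case: A0; exists s.
  have [||||z [ext_z sub_z]] :=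
    @prefix_extremal_below_chain [set language (sval s) | s in A] (language (sval s0)).
  + by exists s0.
  + move=> _ _ [s As <-] [t At <-].
    by have [/asboolP|/asboolP] := total s t As At; [left|right].
  + by move=> _ [s _ <-]; exact: language_factor_closed.
  + move=> _ [s _ <-]; apply: extendable_language => N.
    by exists 0%N; exact: (proj1 (svalP s)).
  have sub_z0' : language z `<=` L0.
    by apply: subset_trans (sub_z _ _) (proj2 (svalP s0)); exists s0.
  by exists (exist _ z (conj ext_z sub_z0')) => s As; apply/asboolP; apply: sub_z; exists s.
exists y; split => // z ext_z sub_zy.
have sub_z0' : language z `<=` L0 by exact: subset_trans sub_zy sub_y.
have := y_min (exist _ z (conj ext_z sub_z0')).
by rewrite /finer /= => /(_ (asboolT sub_zy)) /asboolP.
Qed.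

Lemma minimal_recurrent y : extremal_windows nu rho y ->
  (forall z, prefix_extremal nu rho z -> language z `<=` language y ->
     language y `<=` language z) ->
  recurrent y.
Proof.
move=> win y_min w Lw N; pose tail i := y (N + i)%N.
have sub_tail : language tail `<=` language y.
  by move=> _ [k [n [n_gt0 ->]]]; rewrite subword_shift; exact: language_subword.
have [z [ext_z sub_z]] : exists z, prefix_extremal nu rho z /\ language z `<=` language tail.
  apply: prefix_extremal_in_language => M.
  by have [i [_ ext_i]] := extremal_windows_shift N win M 0; exists i.
have /sub_z[k [n [_ ->]]] := y_min z ext_z (subset_trans sub_z sub_tail) w Lw.
by exists (N + k)%N; rewrite size_subword /tail subword_shift leq_addr.
Qed.

End Compactness.

Theorem lemma2 (R : realType) (d m : nat) (B : 'I_m -> 'M[R]_d)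
  (x : nat -> 'I_m) :
  very_weakly_extremal B x ->
  exists y : nat -> 'I_m,
    [/\ recurrent y, strongly_extremal B y & language y `<=` language x].
Proof.
move=> vwe; pose nu w := opnorm (word_mx B w).
have nu_ge0 w : 0 <= nu w by exact: opnorm_ge0.
have nu_nil : nu [::] <= 1 := opnorm_word_mx_nil B.
have nu_cat s t : nu (s ++ t) <= nu s * nu t := opnorm_word_mx_cat B s t.
have rho_ge0 : 0 <= jsr B.
  by rewrite -lee_fin -vwe; apply: limn_esup_ge0 => n; rewrite lee_fin powR_ge0.
have win_x : extremal_windows nu (jsr B) x.
  apply: (limsup_extremal_windows nu_ge0 nu_nil nu_cat).
  by rewrite -vwe; apply: congr1; apply/funext => n; rewrite xprod_word_mx.
have [z0 [ext_z0 sub_z0]] :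
    exists z, prefix_extremal nu (jsr B) z /\ language z `<=` language x.
  apply: (@prefix_extremal_in_language _ _ nu) => N.
  by have [i [_ ext_i]] := win_x N 0%N; exists i.
have [y [ext_y sub_y y_min]] := minimal_prefix_extremal ext_z0 sub_z0.
exists y; split => //.
  have win_y := prefix_extremal_windows nu_ge0 nu_nil nu_cat rho_ge0 ext_y.
  exact: minimal_recurrent win_y y_min.
exists (1 / 2); split => [|n n_gt0]; first lra.
by rewrite xprod_word_mx mul1r mulrC; exact: (prefix_extremal_le ext_y n_gt0).
Qed.
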